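(* Let $G^{Init}$ be a gene tree for a gene set $\Gamma$, let $\mathcal G=\{G_1,\dots,G_k\}$ be a set of separated subtrees of $G^{Init}$ with $\bigcup_i\mathcal L(G_i)=\Gamma$, and let $G^{TR}$ be a tree for $\Gamma$ that displays every $G_i$ and is triplet respecting. Then for every node $x$ of $G^{Init}$ with $|\mathcal G(x)|\ge 2$, there exists a node $y$ of $G^{TR}$ such that $\mathcal L(y)=\mathcal L(x)$.
   Context: All trees are rooted and binary; $\mathcal L(x)$ denotes the set of leaves below node $x$ and $T[x]$ the subtree rooted at $x$. For $L'\subseteq\mathcal L(T)$, $T|_{L'}$ is obtained from the subtree rooted at $lca_T(L')$ by removing leaves not in $L'$ and suppressing internal degree-2 nodes other than the root; $T$ displays $T'$ if $T|_{\mathcal L(T')}$ is isomorphic to $T'$ preserving leaf labels. $\mathcal G$ is a set of separated subtrees of $G^{Init}$ if $G_i=G^{Init}[v_i]$ for pairwise separated nodes $v_i$ (none an ancestor of another). For a node $x$ of $G^{Init}$, $\mathcal G(x)$ is the set of trees of $\mathcal G$ that are subtrees of $G^{Init}[x]$. A tree $G^{TR}$ for $\Gamma$ displaying every $G_i$ is triplet respecting if for any three distinct trees $G_{i_1},G_{i_2},G_{i_3}\in\mathcal G$ and genes $a\in\mathcal L(G_{i_1})$, $b\in\mathcal L(G_{i_2})$, $c\in\mathcal L(G_{i_3})$, $G^{Init}|_{\{a,b,c\}}=G^{TR}|_{\{a,b,c\}}$. *)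

From mathcomp Require Import all_boot.
From Stdlib Require List.
Set Implicit Arguments. Unset Strict Implicit. Unset Printing Implicit Defensive.

Inductive tree (A : Type) : Type :=
| Leaf of A
| Node of tree A & tree A.
Arguments Leaf {A}.
Arguments Node {A}.

Section Trees.
Variable A : eqType.

Fixpoint leaves (t : tree A) : seq A :=
  match t with Leaf a => [:: a] | Node l r => leaves l ++ leaves r end.

(* Nodes of T, identified with the subtrees T[x] rooted at them
   (with pairwise distinct leaf labels this identification is faithful). *)
Fixpoint subtrees (t : tree A) : seq (tree A) :=
  match t with
  | Leaf _ => [:: t]
  | Node l r => t :: (subtrees l ++ subtrees r)
  end.

Definition tree_for (Gamma : seq A) (t : tree A) : Prop :=
  uniq (leaves t) /\ leaves t =i Gamma.

(* T|_{L'}: keep leaves in L', take the subtree at their lca and suppress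
   degree-2 nodes; None when no leaf of T lies in L'. *)
Fixpoint restrict (L : pred A) (t : tree A) : option (tree A) :=
  match t with
  | Leaf a => if L a then Some (Leaf a) else None
  | Node l r =>
      match restrict L l, restrict L r with
      | Some l', Some r' => Some (Node l' r')
      | Some l', None => Some l'
      | None, Some r' => Some r'
      | None, None => None
      end
  end.

Fixpoint iso (t u : tree A) : bool :=
  match t, u with
  | Leaf a, Leaf b => a == b
  | Node l r, Node l' r' => (iso l l' && iso r r') || (iso l r' && iso r l')
  | _, _ => false
  end.

Definition opt_iso (t u : option (tree A)) : bool :=
  match t, u with
  | Some t, Some u => iso t u
  | None, None => true
  | _, _ => false
  end.

Definition displays (t t' : tree A) : bool :=
  opt_iso (restrict (fun a => a \in leaves t') t) (Some t').

(* Gs : 'I_k -> tree A is a set of separated subtrees of GI: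
   each Gs i is GI[v_i] for a node v_i of GI, and for i <> j
   v_i is not a descendant (or equal) of v_j. *)
Definition separated_subtrees (GI : tree A) (k : nat) (Gs : 'I_k -> tree A) : Prop :=
  (forall i, Stdlib.Lists.List.In (Gs i) (subtrees GI)) /\
  (forall i j, i != j -> ~ Stdlib.Lists.List.In (Gs i) (subtrees (Gs j))).

Definition triplet_respecting (GI : tree A) (k : nat) (Gs : 'I_k -> tree A)
    (GTR : tree A) : Prop :=
  forall i1 i2 i3 : 'I_k, i1 != i2 -> i1 != i3 -> i2 != i3 ->
  forall a b c, a \in leaves (Gs i1) -> b \in leaves (Gs i2) -> c \in leaves (Gs i3) ->
    opt_iso (restrict (fun g => g \in [:: a; b; c]) GI)
            (restrict (fun g => g \in [:: a; b; c]) GTR).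

End Trees.

(* A cluster of a tree with distinct leaf labels is characterised by separations: a
   nonempty set X of leaves is the leaf set of a node as soon as, for every leaf c
   outside X, some node contains X but not c (clusters sharing a leaf are nested, so
   descending into the child containing X must stop exactly at X).  Take X = L(x).
   Leaves a, b of x from two different trees of the family, together with c (which
   lies in a third tree, since the trees meeting x lie below x), form a triplet ab|c
   in G^Init, witnessed by x; triplet respect carries it over to G^TR.  Chaining these
   triplets through two fixed leaves a0 in G_i and b0 in G_j, and merging the nested
   clusters that share a0, gives a node of G^TR containing all of L(x) and avoiding c. *)
From mathcomp Require Import all_boot.
From Stdlib Require List.
Import Stdlib.Lists.List (In, in_or_app, in_app_or).
Set Implicit Arguments. Unset Strict Implicit.

Section Clusters.
Variable A : eqType.
Implicit Types (t u w z : tree A) (S : pred A) (X : seq A).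

Lemma subtree_refl t : In t (subtrees t).
Proof. by case: t => /= *; left. Qed.

Lemma in_subtrees_Node l r z :
  In z (subtrees (Node l r)) -> [\/ Node l r = z, In z (subtrees l) | In z (subtrees r)].
Proof.
case=> [<-|zlr]; first by constructor 1.
by case: (in_app_or _ _ _ zlr); [constructor 2|constructor 3].
Qed.

Lemma subtree_Nodel l r z : In z (subtrees l) -> In z (subtrees (Node l r)).
Proof. by move=> zl; right; apply: in_or_app; left. Qed.

Lemma subtree_Noder l r z : In z (subtrees r) -> In z (subtrees (Node l r)).
Proof. by move=> zr; right; apply: in_or_app; right. Qed.

Lemma subtree_trans t u z : In u (subtrees t) -> In z (subtrees u) -> In z (subtrees t).
Proof.
elim: t => [a|l IHl r IHr]; first by case=> // <-.
case/in_subtrees_Node => [<- //|ul|ur] zu.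
  exact: subtree_Nodel (IHl ul zu).
exact: subtree_Noder (IHr ur zu).
Qed.

Lemma leaves_subtree t z : In z (subtrees t) -> {subset leaves z <= leaves t}.
Proof.
elim: t => [a|l IHl r IHr] /=; first by case=> // <-.
case/in_subtrees_Node => [<- //|zl|zr] g gz; rewrite mem_cat.
  by rewrite (IHl zl g gz).
by rewrite (IHr zr g gz) orbT.
Qed.

Lemma exists_leaf t : exists a, a \in leaves t.
Proof.
elim: t => [a|l [a al] r _] /=; first by exists a; rewrite inE.
by exists a; rewrite mem_cat al.
Qed.

Lemma subtrees_nested t z w a :
  uniq (leaves t) -> In z (subtrees t) -> In w (subtrees t) ->
  a \in leaves z -> a \in leaves w -> In z (subtrees w) \/ In w (subtrees z).
Proof.
elim: t => [b|l IHl r IHr] /=.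
  by move=> _ [<-|//] [<-|//] _ _; left; apply: subtree_refl.
rewrite cat_uniq => /and3P [Ul lr Ur].
have lr_disj g : g \in leaves l -> g \in leaves r -> False.
  by move=> gl gr; move/hasP: lr; apply; exists g.
case/in_subtrees_Node => [<-|zl|zr]; first by right.
- case/in_subtrees_Node => [<-|wl|wr] az aw; first by left; apply: subtree_Nodel.
    exact: IHl.
  by case: (lr_disj a); [apply: leaves_subtree zl _ az|apply: leaves_subtree wr _ aw].
- case/in_subtrees_Node => [<-|wl|wr] az aw; first by left; apply: subtree_Noder.
    by case: (lr_disj a); [apply: leaves_subtree wl _ aw|apply: leaves_subtree zr _ az].
  exact: IHr.
Qed.

Lemma leaves_restrict S t : oapp (@leaves A) [::] (restrict S t) = filter S (leaves t).
Proof.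
elim: t => [a|l IHl r IHr] /=; first by case: (S a).
rewrite filter_cat -IHl -IHr.
by case: (restrict S l) => [l'|]; case: (restrict S r) => [r'|] //=; rewrite cats0.
Qed.

Lemma restrict_subtree S t z z' : In z (subtrees t) -> restrict S z = Some z' ->
  exists t', restrict S t = Some t' /\ In z' (subtrees t').
Proof.
elim: t => [a|l IHl r IHr].
  by case=> // <- Ez; exists z'; split; [|apply: subtree_refl].
case/in_subtrees_Node => [<-|zl|zr] Ez; first by exists z'; split; [|apply: subtree_refl].
- have [l' [/= -> z'l']] := IHl zl Ez.
  case: (restrict S r) => [r'|]; last by exists l'.
  by exists (Node l' r'); split => //; apply: subtree_Nodel.
- have [r' [/= -> z'r']] := IHr zr Ez.
  case: (restrict S l) => [l'|]; last by exists r'.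
  by exists (Node l' r'); split => //; apply: subtree_Noder.
Qed.

Lemma subtree_restrict S t t' z' : restrict S t = Some t' -> In z' (subtrees t') ->
  exists z, In z (subtrees t) /\ restrict S z = Some z'.
Proof.
elim: t t' => [a|l IHl r IHr] t' /=.
  case Sa: (S a) => //; case=> <- /= [<-|//].
  by exists (Leaf a); split; [left|rewrite /= Sa].
case El: (restrict S l) => [l'|]; case Er: (restrict S r) => [r'|] // [<-].
- case/in_subtrees_Node => [<-|z'l|z'r].
  + by exists (Node l r); split; [left|rewrite /= El Er].
  + by have [z [zl ?]] := IHl _ El z'l; exists z; split => //; apply: subtree_Nodel.
  + by have [z [zr ?]] := IHr _ Er z'r; exists z; split => //; apply: subtree_Noder.
- by move=> z'l; have [z [zl ?]] := IHl _ El z'l; exists z; split => //; apply: subtree_Nodel.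
- by move=> z'r; have [z [zr ?]] := IHr _ Er z'r; exists z; split => //; apply: subtree_Noder.
Qed.

Lemma iso_leaves t u : iso t u -> leaves u =i leaves t.
Proof.
elim: t u => [a|l IHl r IHr] [b|l' r'] //=; first by move/eqP->.
case/orP=> /andP [isol isor] g; rewrite !mem_cat (IHl _ isol) (IHr _ isor) //.
exact: orbC.
Qed.

Lemma iso_subtree t u z : iso t u -> In z (subtrees t) ->
  exists w, In w (subtrees u) /\ leaves w =i leaves z.
Proof.
elim: t u => [a|l IHl r IHr] [b|l' r'] //=.
  by move/eqP=> -> [<-|//]; exists (Leaf b); split; [left|].
move=> isolr; case/in_subtrees_Node => [<-|zl|zr].
  by exists (Node l' r'); split; [left|exact: (@iso_leaves (Node l r) (Node l' r') isolr)].
- have [u [isou ul']] : exists u, iso l u /\ In u (subtrees (Node l' r')).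
    case/orP: isolr => /andP [isol _].
      by exists l'; split => //; apply/subtree_Nodel/subtree_refl.
    by exists r'; split => //; apply/subtree_Noder/subtree_refl.
  have [w [wu lw]] := IHl _ isou zl.
  by exists w; split => //; apply: subtree_trans ul' wu.
- have [u [isou ul']] : exists u, iso r u /\ In u (subtrees (Node l' r')).
    case/orP: isolr => /andP [_ isor].
      by exists r'; split => //; apply/subtree_Noder/subtree_refl.
    by exists l'; split => //; apply/subtree_Nodel/subtree_refl.
  have [w [wu lw]] := IHr _ isou zr.
  by exists w; split => //; apply: subtree_trans ul' wu.
Qed.

Definition separates t X (c : A) :=
  exists z, [/\ In z (subtrees t), {subset X <= leaves z} & c \notin leaves z].

Lemma separates_sub t X Y c :
  {subset Y <= X} -> separates t X c -> separates t Y c.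
Proof. by move=> YX [z [zt Xz cz]]; exists z; split=> // g /YX /Xz. Qed.

Lemma separates_cat t X Y b c : uniq (leaves t) -> b \in X -> b \in Y ->
  separates t X c -> separates t Y c -> separates t (X ++ Y) c.
Proof.
move=> Ut bX bY [z [zt Xz cz]] [w [wt Yw cw]].
have [zw|wz] := subtrees_nested Ut zt wt (Xz _ bX) (Yw _ bY).
  by exists w; split=> // g; rewrite mem_cat => /orP [/Xz /(leaves_subtree zw)|/Yw].
by exists z; split=> // g; rewrite mem_cat => /orP [/Xz|/Yw /(leaves_subtree wz)].
Qed.

Lemma separates_cons t a s c : uniq (leaves t) -> separates t [:: a] c ->
  (forall b, b \in s -> separates t [:: a; b] c) -> separates t (a :: s) c.
Proof.
move=> Ut; elim: s => [//|b s IHs] sep_a sep_ab.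
have sep_as : separates t (a :: s) c.
  by apply: IHs => // b' b's; apply: sep_ab; rewrite inE b's orbT.
have sep_ab' := sep_ab b (mem_head b s).
apply: separates_sub (separates_cat Ut (mem_head a s) (mem_head a [:: b]) sep_as sep_ab').
by move=> g; rewrite !inE mem_cat !inE; case/or3P => ->; rewrite ?orbT.
Qed.

Lemma separates_restrict S t1 t2 X a c :
  opt_iso (restrict S t1) (restrict S t2) -> a \in X -> {subset X <= S} -> c \in S ->
  separates t1 X c -> separates t2 X c.
Proof.
move=> iso12 aX XS cS [z [zt1 Xz cz]].
have z_restr := leaves_restrict S z.
case Ez: (restrict S z) z_restr => [z'|] /= z_restr; last first.
  have : a \in filter S (leaves z) by rewrite mem_filter; apply/andP; split; [apply: XS|apply: Xz].
  by rewrite -z_restr.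
have [t1' [Et1 z't1']] := restrict_subtree zt1 Ez.
move: iso12; rewrite Et1; case Et2: (restrict S t2) => [t2'|] // iso12.
have [w [wt2' lw]] := iso_subtree iso12 z't1'.
have [z2 [z2t2 Ez2]] := subtree_restrict Et2 wt2'.
have z2_restr := leaves_restrict S z2; rewrite Ez2 /= in z2_restr.
have w_filter g : (g \in leaves w) = S g && (g \in leaves z).
  by rewrite lw z_restr mem_filter.
exists z2; split=> // [g gX|].
  have : g \in leaves w by rewrite w_filter; apply/andP; split; [apply: XS|apply: Xz].
  by rewrite z2_restr mem_filter => /andP [].
apply: contra cz => cz2.
have : c \in leaves w by rewrite z2_restr mem_filter cz2 andbT; apply: cS.
by rewrite w_filter => /andP [].
Qed.

Lemma cluster_of_separates t X a : uniq (leaves t) -> a \in X -> {subset X <= leaves t} ->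
  (forall c, c \in leaves t -> c \notin X -> separates t X c) ->
  exists y, In y (subtrees t) /\ leaves y =i X.
Proof.
move=> Ut aX Xt sepX.
suff below u : In u (subtrees t) -> {subset X <= leaves u} ->
    exists y, In y (subtrees u) /\ leaves y =i X.
  exact: below (subtree_refl t) Xt.
elim: u => [b|l IHl r IHr] ut Xu.
  exists (Leaf b); split; first by left.
  have := Xu a aX; rewrite inE => /eqP ab.
  by move=> g; apply/idP/idP => [|/Xu //]; rewrite inE => /eqP ->; rewrite -ab.
have lt : In l (subtrees t) by apply: subtree_trans ut (subtree_Nodel _ (subtree_refl l)).
have rt : In r (subtrees t) by apply: subtree_trans ut (subtree_Noder _ (subtree_refl r)).
have [/allP Xl|Nl] := boolP (all (mem (leaves l)) X).
  by have [y [yl ly]] := IHl lt Xl; exists y; split => //; apply: subtree_Nodel.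
have [/allP Xr|Nr] := boolP (all (mem (leaves r)) X).
  by have [y [yr ly]] := IHr rt Xr; exists y; split => //; apply: subtree_Noder.
exists (Node l r); split; first exact: subtree_refl.
move=> g; apply/idP/idP => [gu|/Xu //]; apply/negPn/negP => gX.
have [z [zt Xz gz]] := sepX g (leaves_subtree ut gu) gX.
case: (subtrees_nested Ut zt ut (Xz a aX) (Xu a aX)) => [/in_subtrees_Node [zu|zl|zr]|uz].
- by rewrite -zu gu in gz.
- by case/negP: Nl; apply/allP => h /Xz /(leaves_subtree zl).
- by case/negP: Nr; apply/allP => h /Xz /(leaves_subtree zr).
- by case/negP: gz; apply: leaves_subtree uz _ gu.
Qed.

End Clusters.

Section TripletRespecting.
Variables (A : eqType) (Gamma : seq A) (GI GTR : tree A) (k : nat) (Gs : 'I_k -> tree A).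
Hypotheses (GI_for : tree_for Gamma GI) (Gs_sep : separated_subtrees GI Gs).
Hypothesis Gs_cover : forall g, g \in Gamma <-> exists m, g \in leaves (Gs m).
Hypotheses (GTR_for : tree_for Gamma GTR) (GTR_triplets : triplet_respecting GI Gs GTR).
Variables (x : tree A) (i j : 'I_k).
Hypotheses (x_GI : In x (subtrees GI)) (ij : i != j).
Hypotheses (Gi_x : In (Gs i) (subtrees x)) (Gj_x : In (Gs j) (subtrees x)).

Lemma leaves_x_Gamma : {subset leaves x <= Gamma}.
Proof. by case: GI_for => _ LI g /(leaves_subtree x_GI); rewrite LI. Qed.

Lemma leaves_Gs_sub_x m a : a \in leaves (Gs m) -> a \in leaves x ->
  {subset leaves (Gs m) <= leaves x}.
Proof.
case: GI_for Gs_sep => UI _ [Gs_GI Gs_disj] am ax.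
have [Gm_x|x_Gm] := subtrees_nested UI (Gs_GI m) x_GI am ax; first exact: leaves_subtree.
have [im|im] := eqVneq i m; last by case: (Gs_disj i m im); apply: subtree_trans x_Gm Gi_x.
by case: (Gs_disj j m); [rewrite -im eq_sym|apply: subtree_trans x_Gm Gj_x].
Qed.

Lemma separates_triplet_x c a b ma mb : c \in Gamma -> c \notin leaves x -> ma != mb ->
  a \in leaves (Gs ma) -> b \in leaves (Gs mb) -> a \in leaves x -> b \in leaves x ->
  separates GTR [:: a; b] c.
Proof.
move=> cG cx mab aGa bGb ax bx.
have [mc cGc] := (Gs_cover c).1 cG.
have neq_mc m g : g \in leaves (Gs m) -> g \in leaves x -> m != mc.
  move=> gm gx; apply: contraNneq cx => mmc; rewrite -mmc in cGc.
  exact: leaves_Gs_sub_x gm gx _ cGc.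
have abc := GTR_triplets mab (neq_mc _ _ aGa ax) (neq_mc _ _ bGb bx) aGa bGb cGc.
apply: (separates_restrict abc (mem_head a _)).
- by move=> g; rewrite !inE => /orP [] ->; rewrite ?orbT.
- by rewrite !inE eqxx !orbT.
- by exists x; split => // g; rewrite !inE => /orP [] /eqP ->.
Qed.

Lemma separates_leaves_x c : c \in Gamma -> c \notin leaves x -> separates GTR (leaves x) c.
Proof.
move=> cG cx; case: GTR_for => UT _.
have [a0 a0i] := exists_leaf (Gs i); have a0x := leaves_subtree Gi_x a0i.
have [b0 b0j] := exists_leaf (Gs j); have b0x := leaves_subtree Gj_x b0j.
have sep_a0b0 := separates_triplet_x cG cx ij a0i b0j a0x b0x.
have sep_a0 a : a \in leaves x -> separates GTR [:: a0; a] c.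
  move=> ax; have [m am] := (Gs_cover a).1 (leaves_x_Gamma ax).
  have [im|im] := eqVneq i m; last exact: separates_triplet_x cG cx im a0i am a0x ax.
  rewrite -im in am; have ji : j != i by rewrite eq_sym.
  have sep_b0a := separates_triplet_x cG cx ji b0j am b0x ax.
  apply: separates_sub
    (separates_cat UT (mem_last a0 [:: b0]) (mem_head b0 [:: a]) sep_a0b0 sep_b0a).
  by move=> g; rewrite !inE => /orP [] ->; rewrite ?orbT.
apply: separates_sub (separates_cons UT (separates_sub _ sep_a0b0) sep_a0).
- by move=> g gx; rewrite inE gx orbT.
- by move=> g; rewrite inE => /eqP ->; apply: mem_head.
Qed.

End TripletRespecting.

Theorem lemma6 (A : eqType) (Gamma : seq A) (GI GTR : tree A)
    (k : nat) (Gs : 'I_k -> tree A) :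
  tree_for Gamma GI ->
  separated_subtrees GI Gs ->
  (forall g, g \in Gamma <-> exists i, g \in leaves (Gs i)) ->
  tree_for Gamma GTR ->
  (forall i, displays GTR (Gs i)) ->
  triplet_respecting GI Gs GTR ->
  forall x, Stdlib.Lists.List.In x (subtrees GI) ->
  (exists i j : 'I_k, i != j /\ Stdlib.Lists.List.In (Gs i) (subtrees x) /\ Stdlib.Lists.List.In (Gs j) (subtrees x)) ->
  exists y, Stdlib.Lists.List.In y (subtrees GTR) /\ leaves y =i leaves x.
Proof.
move=> GI_for Gs_sep Gs_cover GTR_for _ GTR_triplets x x_GI [i [j [ij [Gi_x Gj_x]]]].
have [UT LT] := GTR_for; have [a ax] := exists_leaf x.
apply: (cluster_of_separates UT ax) => [g gx|c].
  by rewrite LT; exact: (leaves_x_Gamma GI_for x_GI gx).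
rewrite LT; exact: (separates_leaves_x GI_for Gs_sep Gs_cover GTR_for GTR_triplets
  x_GI ij Gi_x Gj_x).
Qed.
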